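(* Let $\boldsymbol\eta$ be a standard max-stable process with generator $\mathbf Z$, and let $G(f)=P(\boldsymbol\eta\le f)=\exp(-\|f\|_D)$, $f\in\bar E^-[0,1]$, be its functional distribution function. Then: (i) $G$ is continuous with respect to the sup-norm $\|\cdot\|_\infty$; (ii) for every $f\in\bar E^-[0,1]$ we have $P(\boldsymbol\eta\le f)=P(\boldsymbol\eta<f)$; in particular, the sets $\{g\in\bar C^-[0,1]: g(t)\le f(t)\text{ for all }t\in[0,1]\}$ are continuity sets of the distribution of $\boldsymbol\eta$ on $(\bar C^-[0,1],\|\cdot\|_\infty)$.
   Context: $E[0,1]$: bounded functions on $[0,1]$ with finitely many discontinuities; $\bar E^-[0,1]=\{f\in E[0,1]:f\le 0\}$; $\bar C^-[0,1]=\{f\in C[0,1]:f\le 0\}$. $\boldsymbol\eta\le f$ (resp. $<$) means $\eta_t\le f(t)$ (resp. $<$) for all $t\in[0,1]$. A generator is a process $\mathbf Z$ with continuous nonnegative paths, $\max_t Z_t=m$ a.s. for a constant $m\in[1,\infty)$, and $E(Z_t)=1$ for all $t$; the $D$-norm is $\|f\|_D=E(\sup_{t\in[0,1]}(|f(t)|Z_t))$. A standard max-stable process with generator $\mathbf Z$ is a process with paths in $\bar C^-[0,1]$ that is max-stable (for iid copies $\boldsymbol\eta_i$ and each $n$ there are $a_n>0,b_n\in C[0,1]$ with $\boldsymbol\eta=_D\max_{i\le n}(\boldsymbol\eta_i-b_n)/a_n$), has margins $P(\eta_t\le x)=e^x$, $x\le0$, and satisfies $P(\max_{t\in K_j}\eta_t\le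 x_j,1\le j\le d)=\exp(-E(\max_j|x_j|\max_{t\in K_j}Z_t))$ for compact $K_j\subset[0,1]$, $x_j\le 0$; equivalently $P(\boldsymbol\eta\le f)=\exp(-\|f\|_D)$ for $f\in\bar E^-[0,1]$. *)

From HB Require Import structures.
From mathcomp Require Import all_boot all_order all_algebra.
From mathcomp Require Import all_classical all_reals all_analysis.
Set Implicit Arguments. Unset Strict Implicit. Unset Printing Implicit Defensive.
Import Order.TTheory GRing.Theory Num.Theory.
Import numFieldNormedType.Exports.
Local Open Scope classical_set_scope.
Local Open Scope ring_scope.

Section Defs.
Context {R : realType}.

(* The unit interval [0,1] as a subset of R; functions on [0,1] are
   represented as functions R -> R of which only the restriction to [0,1]
   matters. *)
Definition I01 : set R := `[0, 1].

Definition discont_at (f : R -> R) (t : R) : Prop :=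
  ~ (f @ within I01 (nbhs t) --> f t).

Definition E01 (f : R -> R) : Prop :=
  (exists M : R, forall t, I01 t -> `|f t| <= M) /\
  finite_set [set t | I01 t /\ discont_at f t].

Definition E01neg (f : R -> R) : Prop := E01 f /\ (forall t, I01 t -> f t <= 0).

Definition C01neg (f : R -> R) : Prop :=
  {within I01, continuous f} /\ (forall t, I01 t -> f t <= 0).

Definition supnorm (f : R -> R) : R := sup [set `|f t| | t in I01].

Definition Dnorm {d} {Om : measurableType d} (Q : probability Om R)
  (Z : Om -> R -> R) (f : R -> R) : \bar R :=
  (\int[Q]_w ereal_sup [set (`|f t| * Z w t)%:E | t in I01])%E.

Definition is_generator {d} {Om : measurableType d} (Q : probability Om R)
  (Z : Om -> R -> R) : Prop :=
  (forall t, I01 t -> measurable_fun setT (fun w => Z w t)) /\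
  (forall w, {within I01, continuous (Z w)}) /\
  (forall w t, I01 t -> 0 <= Z w t) /\
  (exists m : R, 1 <= m /\
     {ae Q, forall w, ereal_sup [set (Z w t)%:E | t in I01] = m%:E}) /\
  (forall t, I01 t -> (\int[Q]_w (Z w t)%:E = 1)%E).

Definition ev_le {T : Type} (eta : T -> R -> R) (f : R -> R) : set T :=
  [set w | forall t, I01 t -> eta w t <= f t].
Definition ev_lt {T : Type} (eta : T -> R -> R) (f : R -> R) : set T :=
  [set w | forall t, I01 t -> eta w t < f t].

Definition std_max_stable {d} {Om : measurableType d} (P : probability Om R)
  (eta : Om -> R -> R) {d'} {Om' : measurableType d'} (Q : probability Om' R)
  (Z : Om' -> R -> R) : Prop :=
  is_generator Q Z /\
  (forall t, I01 t -> measurable_fun setT (fun w => eta w t)) /\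
  (forall w, C01neg (eta w)) /\
  (* max-stability, via equality of the finite-dimensional distributions
     of eta and max_{i<=n}(eta_i - b_n)/a_n for iid copies eta_i *)
  (forall n : nat, exists a : R, exists b : R -> R,
     0 < a /\ {within I01, continuous b} /\
     forall (k : nat) (ts : 'I_k -> R) (xs : 'I_k -> R),
       (forall j, I01 (ts j)) ->
       fine (P [set w | forall j, eta w (ts j) <= xs j]) =
       fine (P [set w | forall j, eta w (ts j) <= a * xs j + b (ts j)])
         ^+ n.+1) /\
  (forall t x, I01 t -> x <= 0 -> P [set w | eta w t <= x] = (expR x)%:E) /\
  (forall (k : nat) (K : 'I_k.+1 -> set R) (x : 'I_k.+1 -> R),
     (forall j, compact (K j) /\ K j `<=` I01 /\ K j !=set0) ->
     (forall j, x j <= 0) ->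
     P [set w | forall j t, K j t -> eta w t <= x j] =
     expeR (- (\int[Q]_w
        ereal_sup [set e | exists j t, K j t /\ e = (`|x j| * Z w t)%:E]))%E).

Definition Gfun {d} {Om : measurableType d} (P : probability Om R)
  (eta : Om -> R -> R) (f : R -> R) : R := fine (P (ev_le eta f)).

Definition C01neg_boundary (A : set (R -> R)) : set (R -> R) :=
  [set g | C01neg g /\ forall e : R, 0 < e ->
     (exists h, C01neg h /\ A h /\ supnorm (g \- h) < e) /\
     (exists h, C01neg h /\ ~ A h /\ supnorm (g \- h) < e)].

End Defs.

(* Since max Z = m a.s., |g| <= |f| + d on [0,1] gives ||g||_D <= ||f||_D + d m,
   and exp(-x) is 1-Lipschitz on [0, oo): so |G f - G g| <= m ||f - g||_oo,
   which is (i).  For (ii), {eta <= f - d} is contained in {eta < f} and is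
   disjoint from the paths on the boundary of {g <= f}, while
   G f - G (f - d) <= m d; letting d -> 0 gives both claims.  Measurability
   of the events involved comes from the continuity of the paths: off the
   finitely many discontinuities of f, conditions over [0,1] can be checked on
   the rationals. *)

From HB Require Import structures.
From mathcomp Require Import all_boot all_order all_algebra.
From mathcomp Require Import all_classical all_reals all_analysis.
From mathcomp Require Import measurable_realfun.
From mathcomp Require Import ring lra.
Set Implicit Arguments. Unset Strict Implicit. Unset Printing Implicit Defensive.
Import Order.TTheory GRing.Theory Num.Theory.
Import numFieldNormedType.Exports.
Local Open Scope classical_set_scope.
Local Open Scope ring_scope.

Section UnitInterval.
Context {R : realType}.
Local Notation rt := (@ratr R).

Definition continuous01_at (phi : R -> R) t := phi @ within I01 (nbhs t) --> phi t.

Lemma I01E (t : R) : I01 t <-> 0 <= t <= 1.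
Proof. by rewrite /I01 /= in_itv. Qed.

Lemma I01_0 : @I01 R 0.
Proof. by apply/I01E; rewrite lexx ler01. Qed.

Lemma continuous01_of_continuous (g : R -> R) t :
  {within I01, continuous g} -> I01 t -> continuous01_at g t.
Proof. by move=> /subspace_continuousP; apply. Qed.

Lemma continuous01_min (phi psi : R -> R) t :
  continuous01_at phi t -> continuous01_at psi t ->
  continuous01_at (fun x => Num.min (phi x) (psi x)) t.
Proof.
move=> cphi cpsi; rewrite /continuous01_at /= minr_absE.
have -> : (fun x => Num.min (phi x) (psi x)) =
    (fun x => (phi x + psi x - `|phi x - psi x|) / 2).
  by apply/funext => x; rewrite minr_absE.
apply: cvgM; last exact: cvg_cst.
by apply: cvgB; [exact: cvgD|apply: cvg_norm; exact: cvgB].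
Qed.

Lemma continuous01_gt0_near phi t : continuous01_at phi t -> 0 < phi t ->
  exists2 r : R, 0 < r & forall x, I01 x -> `|x - t| < r -> 0 < phi x.
Proof.
move=> cphi phit; have := cvgr_gt _ cphi _ phit; rewrite near_withinE.
move=> /(_ (within_filter _ _)) /nbhs_ballP[r r0 Hr].
by exists r => // x Ix xt; apply: Hr => //; rewrite /ball /= distrC.
Qed.

Lemma rat_near_in_itv (a b t r : R) : a < b -> a <= t <= b -> 0 < r ->
  exists q : rat, a <= rt q <= b /\ `|rt q - t| < r.
Proof.
move=> ab /andP[a_t tb] r0; have [tb'|bt] := ltP t b.
  have : t < Num.min (t + r) b by rewrite lt_min tb' andbT ltrDl.
  move=> /rat_in_itvoo[q]; rewrite in_itv /= lt_min => /andP[tq /andP[qr qb]].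
  exists q; split; first by rewrite (ltW qb) andbT (le_trans a_t) // ltW.
  by rewrite gtr0_norm ?subr_gt0 // ltrBlDl.
have tb2 : t = b by apply/eqP; rewrite eq_le tb bt.
have : Num.max (t - r) a < t by rewrite gt_max tb2 ab andbT ltrBlDr ltrDl.
move=> /rat_in_itvoo[q]; rewrite in_itv /= gt_max => /andP[/andP[rq aq] qt].
exists q; split; first by rewrite (ltW aq) /= -tb2 ltW.
by rewrite ltr0_norm ?subr_lt0 // opprB ltrBlDl -ltrBlDr.
Qed.

Lemma gt0_at_rat_in_itv (a b t : R) phi : 0 <= a -> a < b -> b <= 1 ->
  a <= t <= b -> continuous01_at phi t -> 0 < phi t ->
  exists q : rat, a <= rt q <= b /\ 0 < phi (rt q).
Proof.
move=> a0 ab b1 abt cphi phit; have [r r0 Hr] := continuous01_gt0_near cphi phit.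
have [q [/andP[aq qb] qt]] := rat_near_in_itv ab abt r0.
exists q; split; first by rewrite aq qb.
by apply: Hr qt; apply/I01E; rewrite (le_trans a0 aq) (le_trans qb b1).
Qed.

Lemma exists_gt0_discont_or_rat (f phi : R -> R) :
  (forall t, I01 t -> ~ discont_at f t -> continuous01_at phi t) ->
  (exists t, I01 t /\ 0 < phi t) ->
  (exists t, (I01 t /\ discont_at f t) /\ 0 < phi t) \/
  exists q : rat, I01 (rt q) /\ 0 < phi (rt q).
Proof.
move=> cphi [t [It phit]]; have [dt|ndt] := pselect (discont_at f t).
  by left; exists t.
right; have [q [q01 pq]] := gt0_at_rat_in_itv (lexx 0) ltr01 (lexx 1)
  (proj1 (I01E t) It) (cphi t It ndt) phit.
by exists q; split => //; apply/I01E.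
Qed.

Lemma finite_set_dist_gt0 (D : set R) t : finite_set D -> ~ D t ->
  exists2 r : R, 0 < r & forall x, D x -> r <= `|x - t|.
Proof.
move=> /finite_fsetP[B ->] nt.
exists (\big[Num.min/1]_(x <- finmap.enum_fset B) `|x - t|).
  rewrite big_seq; apply: (big_ind (fun y => 0 < y)) => //.
    by move=> ? ? ? ?; rewrite lt_min; apply/andP.
  move=> x xB; rewrite normr_gt0 subr_eq0; apply/negP => /eqP xt; apply: nt.
  by rewrite -xt.
move=> x Bx; have : x \in finmap.enum_fset B by [].
elim: (finmap.enum_fset B) => // y s IH; rewrite in_cons big_cons.
case/orP => [/eqP->|/IH h]; first by rewrite ge_min lexx.
by rewrite ge_min h orbT.
Qed.

Lemma rat_itv_around (t r : R) : I01 t -> 0 < r -> exists q1 q2 : rat,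
  [/\ 0 <= rt q1, rt q1 < rt q2, rt q2 <= 1,
     rt q1 <= t <= rt q2 & `|rt q1 - t| < r /\ `|rt q2 - t| < r].
Proof.
move=> /I01E /andP[t0 t1] r0.
have [q2 [q2t q21 q2s q2r]] : exists q2 : rat, [/\ t <= rt q2, rt q2 <= 1,
    (t < 1 -> t < rt q2) & `|rt q2 - t| < r].
  have [tl|t1'] := ltP t 1.
    have : t < Num.min (t + r) 1 by rewrite lt_min tl andbT ltrDl.
    move=> /rat_in_itvoo[q]; rewrite in_itv /= lt_min => /andP[tq /andP[qr q1]].
    exists q; split; [exact: ltW|exact: ltW|by []|].
    by rewrite gtr0_norm ?subr_gt0 // ltrBlDl.
  have -> : t = 1 by apply/eqP; rewrite eq_le t1 t1'.
  by exists 1%R; rewrite rmorph1 subrr normr0 ltxx.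
have [q1 [q1t q10 q1s q1r]] : exists q1 : rat, [/\ rt q1 <= t, 0 <= rt q1,
    (0 < t -> rt q1 < t) & `|rt q1 - t| < r].
  have [tl|t0'] := ltP 0 t.
    have : Num.max (t - r) 0 < t by rewrite gt_max tl andbT ltrBlDr ltrDl.
    move=> /rat_in_itvoo[q]; rewrite in_itv /= gt_max => /andP[/andP[rq q0] qt].
    exists q; split; [exact: ltW|exact: ltW|by []|].
    by rewrite ltr0_norm ?subr_lt0 // opprB ltrBlDl -ltrBlDr.
  have -> : t = 0 by apply/eqP; rewrite eq_le t0 t0'.
  by exists 0%R; rewrite rmorph0 subrr normr0 ltxx.
exists q1, q2; split => //; last by rewrite q1t q2t.
have [tp|t0'] := ltP 0 t; first exact: lt_le_trans (q1s tp) q2t.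
have t00 : t = 0 by apply/eqP; rewrite eq_le t0 t0'.
by apply: le_lt_trans q1t (q2s _); rewrite t00 ltr01.
Qed.

End UnitInterval.

Section CountableMeasurability.
Context d (T : measurableType d).

Lemma bigcup_countable_measurable (X : Type) (S : set X) (F : X -> set T) :
  countable S -> (forall x, S x -> measurable (F x)) ->
  measurable (\bigcup_(x in S) F x).
Proof.
move=> /countable_injP[f finj] mF.
pose G n := \bigcup_(x in [set x | S x /\ f x = n]) F x.
have -> : \bigcup_(x in S) F x = \bigcup_(n in f @` S) G n.
  apply/seteqP; split => [w [x Sx Fw]|w [n [x Sx <-] [y [Sy fy] Fw]]].
    by exists (f x); [exists x|exists x].
  by exists y.
apply: bigcup_measurable => _ [x Sx <-].
have -> : G (f x) = F x by apply/seteqP; split => [w [y [Sy /finj fy] Fw]|w Fw];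
  [rewrite -fy ?inE|exists x].
exact: mF.
Qed.

Lemma bigcap_countable_measurable (X : Type) (S : set X) (F : X -> set T) :
  countable S -> (forall x, S x -> measurable (F x)) ->
  measurable (\bigcap_(x in S) F x).
Proof.
move=> cS mF; rewrite -[X in measurable X]setCK setC_bigcap; apply: measurableC.
by apply: bigcup_countable_measurable => // x Sx; exact/measurableC/mF.
Qed.

Lemma measurable_set_lt {R : realType} (g h : T -> R) :
  measurable_fun setT g -> measurable_fun setT h -> measurable [set w | g w < h w].
Proof.
move=> mg mh; have := measurable_fun_ltr mg mh measurableT (Y := [set true]) I.
by rewrite setTI; congr measurable.
Qed.

Lemma measurable_set_le {R : realType} (g h : T -> R) :
  measurable_fun setT g -> measurable_fun setT h -> measurable [set w | g w <= h w].
Proof.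
move=> mg mh; have := measurable_fun_ler mg mh measurableT (Y := [set true]) I.
by rewrite setTI; congr measurable.
Qed.

Lemma measurable_prop_and (P : Prop) (A : set T) :
  (P -> measurable A) -> measurable [set w | P /\ A w].
Proof.
case: (pselect P) => [p|np] mA.
  have -> : [set w | P /\ A w] = A by apply/seteqP; split => [w []|w].
  exact: mA.
by have -> : [set w | P /\ A w] = set0 by apply/seteqP; split => w //= [].
Qed.

Lemma measurable_prop_imply (P : Prop) (A : set T) :
  (P -> measurable A) -> measurable [set w | P -> A w].
Proof.
move=> mA; have -> : [set w | P -> A w] = ~` [set w | P /\ ~ A w].
  apply/seteqP; split => w /=; first by move=> h [/h].
  by move=> h p; apply: contrapT => nA; exact: h.
by apply/measurableC/measurable_prop_and => /mA; exact: measurableC.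
Qed.

End CountableMeasurability.

Section ExistsOnUnitInterval.
Context {R : realType} d (T : measurableType d).
Local Notation rt := (@ratr R).
Variables (f : R -> R) (phi : T -> R -> R).
Hypothesis f_discont_finite : finite_set [set t | I01 t /\ discont_at f t].
Hypothesis phi_measurable : forall t, I01 t -> measurable_fun setT (phi ^~ t).
Hypothesis phi_continuous :
  forall w t, I01 t -> ~ discont_at f t -> continuous01_at (phi w) t.

(* The existential over the uncountable [0,1] reduces to one over the
   discontinuities of [f] and the rationals. *)
Lemma measurable_exists_gt0 : measurable [set w | exists t, I01 t /\ 0 < phi w t].
Proof.
have -> : [set w | exists t, I01 t /\ 0 < phi w t] =
    \bigcup_(t in [set t | I01 t /\ discont_at f t]) [set w | 0 < phi w t] `|`
    \bigcup_(q in [set: rat]) [set w | I01 (rt q) /\ 0 < phi w (rt q)].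
  apply/seteqP; split => [w /(exists_gt0_discont_or_rat (@phi_continuous w))|w].
    by case=> [[t [Dt pt]]|[q qp]]; [left; exists t|right; exists q].
  by case=> [[t [It _] pt]|[q _ qp]]; [exists t|exists (rt q)].
apply: measurableU.
  apply: bigcup_countable_measurable; first exact: finite_set_countable.
  by move=> t [It _]; apply: measurable_set_lt => //; exact: phi_measurable.
apply: bigcup_countable_measurable => // q _; apply: measurable_prop_and => Iq.
by apply: measurable_set_lt => //; exact: phi_measurable.
Qed.

End ExistsOnUnitInterval.

Section RationalIntervals.
Context {R : realType}.
Local Notation rt := (@ratr R).

Definition continuous_rat_itv (f : R -> R) (q1 q2 : rat) : Prop :=
  [/\ 0 <= rt q1, rt q1 < rt q2, rt q2 <= 1 &
     forall x, rt q1 <= x <= rt q2 -> ~ discont_at f x].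

(* On a rational interval where [f] is continuous, [g < f] means that [f - g]
   has a positive minimum, which can be read off the rational points. *)
Lemma lt_on_rat_itvP (f g : R -> R) q1 q2 : continuous_rat_itv f q1 q2 ->
  {within I01, continuous g} ->
  (forall x, rt q1 <= x <= rt q2 -> g x < f x) <->
  exists n : nat, forall q : rat,
    rt q1 <= rt q <= rt q2 -> g (rt q) <= f (rt q) - n.+1%:R^-1.
Proof.
move=> [q10 q12 q21 fcont] gc.
have I01q x : rt q1 <= x <= rt q2 -> I01 x.
  by move=> /andP[x1 x2]; apply/I01E; rewrite (le_trans q10 x1) (le_trans x2 q21).
have cont x c : rt q1 <= x <= rt q2 -> continuous01_at (fun y => f y - c - g y) x.
  move=> xq; apply: cvgB; last exact: continuous01_of_continuous (I01q x xq).
  by apply: cvgB; [exact: contrapT (fcont x xq)|exact: cvg_cst].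
split => [gf|[n gfn] x xq].
  have cphi : {within `[rt q1, rt q2], continuous (fun x => f x - 0 - g x)}.
    apply/subspace_continuousP => x; rewrite /= in_itv /= => xq.
    apply: cvg_trans (cont x 0 xq); apply: cvg_app; apply: within_subset => y /=.
    by rewrite in_itv /=; exact: I01q.
  have [c cq cmin] := EVT_min (ltW q12) cphi.
  move: cq; rewrite in_itv /= => cq.
  have pc : 0 < f c - 0 - g c by rewrite subr0 subr_gt0; exact: gf.
  have [n] := ltr_add_invr pc; rewrite add0r => nc.
  exists n => q qq; have := cmin (rt q); rewrite in_itv /= qq => /(_ isT).
  rewrite subr0 in nc; rewrite !subr0 => h; move: (n.+1%:R^-1) nc => e; lra.
rewrite ltNge; apply/negP => fg.
have n0 : (0 : R) < n.+1%:R^-1 by rewrite invr_gt0.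
have phix : 0 < - (f x - n.+1%:R^-1 - g x).
  by rewrite oppr_gt0; move: (n.+1%:R^-1) n0 => e; lra.
have [q [qq]] := gt0_at_rat_in_itv q10 q12 q21 xq (cvgN (cont x _ xq)) phix.
by rewrite oppr_gt0 subr_lt0 ltNge gfn.
Qed.

(* Finitely many discontinuities leave room for rational intervals of
   continuity around every other point of [0,1]. *)
Lemma lt_on_I01P (f g : R -> R) :
  finite_set [set t | I01 t /\ discont_at f t] ->
  (forall t, I01 t -> g t < f t) <->
  (forall t, I01 t /\ discont_at f t -> g t < f t) /\
  (forall q1 q2, continuous_rat_itv f q1 q2 ->
     forall x, rt q1 <= x <= rt q2 -> g x < f x).
Proof.
move=> fD; split => [gf|[gfD gfq] t It].
  split => [t [It _]|q1 q2 [q10 _ q21 _] x /andP[x1 x2]]; apply: gf => //.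
  by apply/I01E; rewrite (le_trans q10 x1) (le_trans x2 q21).
have [dt|ndt] := pselect (discont_at f t); first exact: gfD.
have [r r0 Hr] := finite_set_dist_gt0 fD (fun h => ndt h.2).
have [q1 [q2 [q10 q12 q21 tq [r1 r2]]]] := rat_itv_around It r0.
apply: (gfq q1 q2) (tq); split => // x /andP[x1 x2] dx.
have Ix : I01 x by apply/I01E; rewrite (le_trans q10 x1) (le_trans x2 q21).
have := Hr x (conj Ix dx); apply/negP; rewrite -ltNge.
move: r1 r2 tq => /ltr_normlP[r1 r1'] /ltr_normlP[r2 r2'] /andP[t1 t2].
have [xt|tx] := leP x t.
  by rewrite ler0_norm ?subr_le0 //; lra.
by rewrite gtr0_norm ?subr_gt0 //; lra.
Qed.

End RationalIntervals.

Section PathEvents.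
Context {R : realType} d (T : measurableType d) (eta : T -> R -> R).
Local Notation rt := (@ratr R).
Hypothesis eta_measurable : forall t, I01 t -> measurable_fun setT (eta ^~ t).
Hypothesis eta_continuous : forall w, {within I01, continuous (eta w)}.
Variable f : R -> R.
Hypothesis f_discont_finite : finite_set [set t | I01 t /\ discont_at f t].

Lemma ev_le_measurable : measurable (ev_le eta f).
Proof.
have -> : ev_le eta f = ~` [set w | exists t, I01 t /\ 0 < eta w t - f t].
  apply/seteqP; split => w /=.
    by move=> le [t [It]]; rewrite subr_gt0 ltNge le.
  move=> nex t It; rewrite leNgt; apply/negP => lt; apply: nex.
  by exists t; rewrite subr_gt0.
apply/measurableC/(measurable_exists_gt0 f_discont_finite).
  by move=> t It; apply: measurable_funB => //; exact: eta_measurable.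
move=> w t It /contrapT ft; apply: cvgB => //.
exact: continuous01_of_continuous.
Qed.

Lemma ev_lt_measurable : measurable (ev_lt eta f).
Proof.
have -> : ev_lt eta f =
    \bigcap_(t in [set t | I01 t /\ discont_at f t]) [set w | eta w t < f t] `&`
    \bigcap_(q1 in [set: rat]) \bigcap_(q2 in [set: rat])
      [set w | continuous_rat_itv f q1 q2 -> exists n : nat, forall q : rat,
         rt q1 <= rt q <= rt q2 -> eta w (rt q) <= f (rt q) - n.+1%:R^-1].
  apply/seteqP; split => w.
    move=> /(lt_on_I01P _ f_discont_finite)[ltD ltq].
    split => [t Dt|q1 _ q2 _ cq]; first exact: ltD.
    exact: (lt_on_rat_itvP cq (@eta_continuous w)).1 (ltq q1 q2 cq).
  move=> [ltD ltq]; apply/(lt_on_I01P _ f_discont_finite).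
  split => [t Dt|q1 q2 cq]; first exact: ltD.
  exact: (lt_on_rat_itvP cq (@eta_continuous w)).2 (ltq q1 I q2 I cq).
apply: measurableI.
  apply: bigcap_countable_measurable; first exact: finite_set_countable.
  by move=> t [It _]; apply: measurable_set_lt => //; exact: eta_measurable.
apply: bigcap_countable_measurable => // q1 _.
apply: bigcap_countable_measurable => // q2 _.
apply: measurable_prop_imply => -[q10 _ q21 _].
suff : measurable (\bigcup_(n in [set: nat]) \bigcap_(q in [set: rat])
    [set w | rt q1 <= rt q <= rt q2 -> eta w (rt q) <= f (rt q) - n.+1%:R^-1]).
  congr measurable; apply/seteqP; split => w [n].
    by move=> _ h; exists n => q; exact: h.
  by move=> h; exists n => // q _; exact: h.
apply: bigcup_countable_measurable => // n _.
apply: bigcap_countable_measurable => // q _.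
apply: measurable_prop_imply => /andP[q1q qq2]; apply: measurable_set_le => //.
by apply: eta_measurable; apply/I01E; rewrite (le_trans q10 q1q) (le_trans qq2 q21).
Qed.

(* By [C01neg_boundary_leE], these are the paths on the boundary of
   [{g <= f}] in the space of nonpositive continuous paths. *)
Definition ev_touch : set T := [set w | ev_le eta f w /\
  forall n : nat, exists t, I01 t /\ f t < 0 /\ f t - n.+1%:R^-1 < eta w t].

Lemma ev_touch_measurable : measurable ev_touch.
Proof.
have -> : ev_touch = ev_le eta f `&` \bigcap_(n in [set: nat])
    [set w | exists t, I01 t /\
       0 < Num.min (- f t) (eta w t - (f t - n.+1%:R^-1))].
  apply/seteqP; split => w [le_f ex]; split => // n.
    move=> _; have [t [It [ft0 ft]]] := ex n.
    by exists t; split => //; rewrite lt_min oppr_gt0 subr_gt0 ft0.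
  have [t [It]] := ex n I; rewrite lt_min oppr_gt0 subr_gt0 => /andP[ft0 ft].
  by exists t.
apply: measurableI; first exact: ev_le_measurable.
apply: bigcap_countable_measurable => // n _.
apply: (measurable_exists_gt0 f_discont_finite).
  move=> t It; apply: measurable_minr => //.
  by apply: measurable_funB => //; exact: eta_measurable.
move=> w t It /contrapT ft; apply: continuous01_min; first exact: cvgN.
apply: cvgB; first exact: continuous01_of_continuous.
by apply: cvgB => //; exact: cvg_cst.
Qed.

End PathEvents.

Section DnormEstimate.
Context {R : realType} d (T : measurableType d) (Z : T -> R -> R).
Hypothesis Z_measurable : forall t, I01 t -> measurable_fun setT (Z ^~ t).
Hypothesis Z_continuous : forall w, {within I01, continuous (Z w)}.
Hypothesis Z_ge0 : forall w t, I01 t -> 0 <= Z w t.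

Definition Dnorm_integrand (f : R -> R) (w : T) : \bar R :=
  ereal_sup [set (`|f t| * Z w t)%:E | t in I01].

Lemma Dnorm_integrand_measurable f :
  finite_set [set t | I01 t /\ discont_at f t] ->
  measurable_fun setT (Dnorm_integrand f).
Proof.
move=> fD; apply: (measurability _ (ErealGenOInfty.measurableE R)).
move=> _ /= -[_ [r ->] <-]; rewrite setTI.
have -> : Dnorm_integrand f @^-1` `]r%:E, +oo[ =
    [set w | exists t, I01 t /\ 0 < `|f t| * Z w t - r].
  apply/seteqP; split => w /=; rewrite in_itv /= andbT.
    move=> /ereal_sup_gt[_ [t It <-]]; rewrite lte_fin => h.
    by exists t; rewrite subr_gt0.
  move=> [t [It]]; rewrite subr_gt0 => h.
  apply: (@lt_le_trans _ _ (`|f t| * Z w t)%:E); first by rewrite lte_fin.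
  by apply: ereal_sup_ubound; exists t.
apply: (measurable_exists_gt0 fD).
  move=> t It; apply: measurable_funB => //.
  by apply: measurable_funM => //; exact: Z_measurable.
move=> w t It /contrapT ft; apply: cvgB; last exact: cvg_cst.
by apply: cvgM; [exact: cvg_norm|exact: continuous01_of_continuous].
Qed.

Lemma Dnorm_integrand_ge0 f w : (0 <= Dnorm_integrand f w)%E.
Proof.
apply: le_trans (ereal_sup_ubound _); last by exists 0 => //; exact: I01_0.
by rewrite lee_fin mulr_ge0 //; apply: Z_ge0; exact: I01_0.
Qed.

Lemma Dnorm_integrand_le f g (del : R) w : 0 <= del ->
  (forall t, I01 t -> `|g t| <= `|f t| + del) ->
  (Dnorm_integrand g w <=
   Dnorm_integrand f w + del%:E * ereal_sup [set (Z w t)%:E | t in I01])%E.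
Proof.
move=> del0 gf; apply: ge_ereal_sup => _ [t It <-].
apply: (@le_trans _ _ ((`|f t| * Z w t)%:E + del%:E * (Z w t)%:E)%E).
  by rewrite -EFinM -EFinD lee_fin -mulrDl ler_wpM2r ?Z_ge0 ?gf.
apply: leeD; first by apply: ereal_sup_ubound; exists t.
by apply: lee_wpmul2l; [rewrite lee_fin|apply: ereal_sup_ubound; exists t].
Qed.

Variables (Q : probability T R) (m : R).
Hypothesis m_ge0 : 0 <= m.
Hypothesis Z_max : {ae Q, forall w, ereal_sup [set (Z w t)%:E | t in I01] = m%:E}.

Lemma Dnorm_le f g (del : R) : 0 <= del ->
  finite_set [set t | I01 t /\ discont_at f t] ->
  finite_set [set t | I01 t /\ discont_at g t] ->
  (forall t, I01 t -> `|g t| <= `|f t| + del) ->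
  (Dnorm Q Z g <= Dnorm Q Z f + (del * m)%:E)%E.
Proof.
move=> del0 fD gD gf; rewrite /Dnorm.
have mf := Dnorm_integrand_measurable fD.
have dm0 : (0 <= (del * m)%:E)%E by rewrite lee_fin mulr_ge0.
apply: (@le_trans _ _ (\int[Q]_w (Dnorm_integrand f w + (del * m)%:E))%E).
  apply: ae_ge0_le_integral => //.
  - by move=> w _; exact: Dnorm_integrand_ge0.
  - exact: Dnorm_integrand_measurable.
  - by move=> w _; apply: adde_ge0 => //; exact: Dnorm_integrand_ge0.
  - exact: emeasurable_funD.
  apply: filterS Z_max => w Zw _.
  by have := Dnorm_integrand_le w del0 gf; rewrite Zw -EFinM.
rewrite ge0_integralD //; last by move=> w _; exact: Dnorm_integrand_ge0.
have QT : Q [set: T] = 1%E by exact: probability_setT.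
rewrite integral_cst // -[X in (_ <= _ + X)%E]mule1.
by rewrite le_eqVlt; apply/orP; left; apply/eqP; congr (_ + _ * _)%E.
Qed.

End DnormEstimate.

Section SupNorm.
Context {R : realType}.

Definition bounded01 (u : R -> R) := exists M, forall t, I01 t -> `|u t| <= M.

Lemma supnorm_ub (u : R -> R) t : bounded01 u -> I01 t -> `|u t| <= supnorm u.
Proof.
move=> [M uM] It; apply: ub_le_sup; last by exists t.
by exists M => _ [x Ix <-]; exact: uM.
Qed.

Lemma supnorm_le (u : R -> R) c : (forall t, I01 t -> `|u t| <= c) -> supnorm u <= c.
Proof.
move=> uc; apply: ge_sup; first by exists `|u 0|, 0 => //; exact: I01_0.
by move=> _ [x Ix <-]; exact: uc.
Qed.

Lemma bounded01_continuous (g : R -> R) : {within I01, continuous g} -> bounded01 g.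
Proof.
move=> gc; have cn : {within `[0, 1], continuous (fun x => `|g x|)}.
  apply/subspace_continuousP => x Ix; apply: cvg_norm.
  exact: continuous01_of_continuous.
have [c _ gc_max] := EVT_max (@ler01 R) cn.
by exists `|g c| => t It; exact: gc_max.
Qed.

Lemma bounded01B (u v : R -> R) : bounded01 u -> bounded01 v -> bounded01 (u \- v).
Proof.
move=> [M1 uM] [M2 vM]; exists (M1 + M2) => t It /=.
by rewrite (le_trans (ler_normB _ _)) // lerD ?uM ?vM.
Qed.

Lemma supnorm_ltP (g h : R -> R) e t : bounded01 g -> bounded01 h -> I01 t ->
  supnorm (g \- h) < e -> g t < h t + e /\ h t < g t + e.
Proof.
move=> gB hB It /(le_lt_trans (supnorm_ub (bounded01B gB hB) It)) /=.
by move=> /ltr_normlP[]; split; lra.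
Qed.

End SupNorm.

Lemma expRN_lipschitz {R : realType} (a b : R) : 0 <= a -> 0 <= b ->
  `|expR (- a) - expR (- b)| <= `|a - b|.
Proof.
wlog ab : a b / a <= b.
  move=> W a0 b0; have [|ba] := leP a b; first by move=> ab; exact: W.
  by rewrite distrC (distrC a); apply: W => //; exact: ltW.
move=> a0 b0; have ea1 : expR (- a) <= 1 by rewrite -expR0 ler_expR lerNl oppr0.
have eba : expR (- b) = expR (- a) * expR (- (b - a)) by rewrite -expRD; congr expR; ring.
rewrite ger0_norm ?subr_ge0 ?ler_expR ?lerN2 // distrC ger0_norm ?subr_ge0 //.
have := expR_ge1Dx (- (b - a)); rewrite eba -{1}(mulr1 (expR (- a))) -mulrBr => h.
apply: (@le_trans _ _ (1 * (1 - expR (- (b - a))))); last by rewrite mul1r; lra.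
by rewrite ler_wpM2r // subr_ge0 -expR0 ler_expR lerNl oppr0 subr_ge0.
Qed.

Lemma discont_at_subr {R : realType} (f : R -> R) (c : R) t :
  discont_at (fun x => f x - c) t <-> discont_at f t.
Proof.
rewrite /discont_at; split => ndc fc; apply: ndc.
  by apply: cvgB => //; exact: cvg_cst.
have fE : (fun x => f x - c + c) = f by apply/funext => x; rewrite subrK.
have : (fun x => f x - c + c) @ within I01 (nbhs t) --> f t - c + c.
  by apply: cvgD => //; exact: cvg_cst.
by rewrite fE subrK.
Qed.

(* The witnesses near [g] are [g] itself, inside, and [min (g + e/2) 0],
   outside. *)
Lemma C01neg_boundary_leE {R : realType} (f g : R -> R) : C01neg g ->
  C01neg_boundary [set h | forall t, I01 t -> h t <= f t] g <->
  (forall t, I01 t -> g t <= f t) /\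
  forall n : nat, exists t, I01 t /\ f t < 0 /\ f t - n.+1%:R^-1 < g t.
Proof.
move=> [gc g0]; have gB := bounded01_continuous gc.
split => [[_ gbd]|[gf gclose]].
  split=> [t It|n].
    apply/ler_addgt0Pr => e e0; have [[h [[hc _] [hf gh]]] _] := gbd e e0.
    have [+ _] := supnorm_ltP gB (bounded01_continuous hc) It gh.
    by have := hf t It; lra.
  have n0 : (0 : R) < n.+1%:R^-1 by rewrite invr_gt0.
  have [_ [h [[hc h0] [hf gh]]]] := gbd _ n0.
  have [t [It ft]] : exists t, I01 t /\ f t < h t.
    apply: contrapT => nx; apply: hf => t It; rewrite leNgt; apply/negP => ft.
    by apply: nx; exists t.
  exists t; split => //; split; first exact: lt_le_trans ft (h0 t It).
  have [_] := supnorm_ltP gB (bounded01_continuous hc) It gh.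
  by rewrite ltrBlDr; exact: lt_trans.
split => [|e e0]; first by split.
have gg : supnorm (g \- g) < e.
  by apply: le_lt_trans e0; apply: supnorm_le => t It /=; rewrite subrr normr0.
split; first by exists g.
have e20 : 0 < e / 2 by rewrite divr_gt0.
have [n] := ltr_add_invr e20; rewrite add0r => ne.
have [t [It [ft0 ft]]] := gclose n.
pose h := (fun _ : R => 0) \min (fun x => g x + e / 2).
exists h; split; [split|split].
- apply: min_fun_continuous; first by move=> x; exact: cvg_cst.
  by move=> x; apply: cvgD; [exact: gc|exact: cvg_cst].
- by move=> x _; rewrite /h /= ge_min lexx.
- move=> /(_ t It); rewrite /h /= ge_min; apply/negP.
  by rewrite negb_or -!ltNge ft0 /=; move: ft ne; move: (n.+1%:R^-1) => x; lra.
- apply: (@le_lt_trans _ _ (e / 2)); last lra.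
  apply: supnorm_le => x Ix; rewrite /h /=; have gx0 := g0 x Ix.
  have [le|lt] := leP (g x + e / 2) 0.
    by rewrite opprD addrA subrr add0r normrN ger0_norm //; lra.
  by rewrite ?subr0 ler0_norm //; lra.
Qed.

Section ProbabilityApproximation.
Context {R : realType} d (T : measurableType d) (P : probability T R).

Lemma probability_eq_approx (A B : set T) : measurable A -> measurable B ->
  A `<=` B ->
  (forall e : R, 0 < e -> exists2 C, measurable C & C `<=` A /\ (P B <= P C + e%:E)%E) ->
  P A = P B.
Proof.
move=> mA mB AB approx; apply/eqP; rewrite eq_le le_measure ?inE //=.
apply/lee_addgt0Pr => e /approx[C mC [CA BC]]; apply: le_trans BC _.
by rewrite leeD2r // le_measure ?inE.
Qed.

Lemma probability_eq0_approx (N B : set T) : measurable N -> measurable B ->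
  N `<=` B ->
  (forall e : R, 0 < e -> exists2 C, measurable C &
     [/\ C `<=` B, C `&` N = set0 & (P B <= P C + e%:E)%E]) ->
  P N = 0%E.
Proof.
move=> mN mB NB approx; apply/eqP; rewrite eq_le measure_ge0 andbT.
apply/lee_addgt0Pr => e /approx[C mC [CB CN BC]]; rewrite add0e.
have CNB : (P C + P N <= P C + e%:E)%E.
  rewrite -measureU //; apply: le_trans BC; apply: le_measure; rewrite ?inE //.
    exact: measurableU.
  by move=> w [/CB|/NB].
by rewrite leeD2lE // in CNB; exact: fin_num_measure.
Qed.

End ProbabilityApproximation.

Section FunctionalDistribution.
Context {R : realType} d (Om : measurableType d) (P : probability Om R).
Context (eta : Om -> R -> R) d' (Om' : measurableType d') (Q : probability Om' R).
Context (Z : Om' -> R -> R) (m : R).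
Hypothesis Z_measurable : forall t, I01 t -> measurable_fun setT (Z ^~ t).
Hypothesis Z_continuous : forall w, {within I01, continuous (Z w)}.
Hypothesis Z_ge0 : forall w t, I01 t -> 0 <= Z w t.
Hypothesis m_gt0 : 0 < m.
Hypothesis Z_max : {ae Q, forall w, ereal_sup [set (Z w t)%:E | t in I01] = m%:E}.
Hypothesis eta_measurable : forall t, I01 t -> measurable_fun setT (eta ^~ t).
Hypothesis eta_continuous : forall w, {within I01, continuous (eta w)}.
Hypothesis P_ev_le_Dnorm :
  forall f, E01neg f -> P (ev_le eta f) = expeR (- Dnorm Q Z f)%E.

Let Dnorm_lipschitz := Dnorm_le Z_measurable Z_continuous Z_ge0 (ltW m_gt0) Z_max.

Lemma Dnorm_ge0 (f : R -> R) : (0 <= Dnorm Q Z f)%E.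
Proof. by apply: integral_ge0 => w _; exact: Dnorm_integrand_ge0. Qed.

Lemma Dnorm_fin_num (f : R -> R) : E01 f -> Dnorm Q Z f \is a fin_num.
Proof.
move=> [[M fM] fD]; have M0 : 0 <= M by apply: le_trans (fM 0 I01_0).
have D0 : Dnorm Q Z (fun _ => 0) = 0%E.
  apply: integral0_eq => w _; rewrite /Dnorm_integrand.
  have -> : [set (`|(fun _ : R => 0 : R) t| * Z w t)%:E | t in I01] = [set 0%E].
    apply/seteqP; split => [_ [t It <-]|_ ->]; first by rewrite normr0 mul0r.
    by exists 0; [exact: I01_0|rewrite normr0 mul0r].
  exact: ereal_sup1.
have const_cont : finite_set [set t : R | I01 t /\ discont_at (fun _ => 0) t].
  by rewrite (_ : [set t | _] = set0) // -subset0 => t [_ []]; exact: cvg_cst.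
have DM : (Dnorm Q Z f <= (M * m)%:E)%E.
  have := Dnorm_lipschitz M0 const_cont fD; rewrite D0 add0e; apply => t It.
  by rewrite normr0 add0r; exact: fM.
by rewrite ge0_fin_numE ?Dnorm_ge0 // (le_lt_trans DM) ?ltry.
Qed.

Lemma P_ev_leE (f : R -> R) : E01neg f -> P (ev_le eta f) = (Gfun P eta f)%:E.
Proof.
move=> fE; rewrite /Gfun fineK // P_ev_le_Dnorm //.
by rewrite -(fineK (Dnorm_fin_num fE.1)).
Qed.

Lemma Gfun_expR (f : R -> R) : E01neg f -> Gfun P eta f = expR (- fine (Dnorm Q Z f)).
Proof. by move=> fE; rewrite /Gfun P_ev_le_Dnorm // -(fineK (Dnorm_fin_num fE.1)). Qed.

Lemma Gfun_lipschitz (f g : R -> R) : E01neg f -> E01neg g ->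
  `|Gfun P eta f - Gfun P eta g| <= m * supnorm (f \- g).
Proof.
move=> fE gE; have [[fB fD] _] := fE; have [[gB gD] _] := gE.
set s := supnorm (f \- g).
have fgs t : I01 t -> `|f t - g t| <= s by exact: supnorm_ub (bounded01B fB gB).
have s0 : 0 <= s := le_trans (normr_ge0 _) (fgs 0 I01_0).
have Dgf : (Dnorm Q Z g <= Dnorm Q Z f + (s * m)%:E)%E.
  apply: Dnorm_lipschitz => // t It; have := ler_normB (f t) (f t - g t).
  by rewrite opprB addrCA subrr addr0 => /le_trans; apply; rewrite lerD2l fgs.
have Dfg : (Dnorm Q Z f <= Dnorm Q Z g + (s * m)%:E)%E.
  apply: Dnorm_lipschitz => // t It; have := ler_normD (g t) (f t - g t).
  by rewrite addrCA subrr addr0 => /le_trans; apply; rewrite lerD2l fgs.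
rewrite !Gfun_expR //; apply: le_trans (expRN_lipschitz _ _) _;
  rewrite ?fine_ge0 ?Dnorm_ge0 //.
rewrite -(fineK (Dnorm_fin_num fE.1)) -(fineK (Dnorm_fin_num gE.1)) in Dgf Dfg.
rewrite -!EFinD !lee_fin in Dgf Dfg.
by rewrite ler_norml; apply/andP; split; lra.
Qed.

Lemma E01neg_subr (f : R -> R) (del : R) :
  E01neg f -> 0 <= del -> E01neg (fun x => f x - del).
Proof.
move=> [[[M fM] fD] f0] del0; split; last by move=> t It; have := f0 t It; lra.
split; last first.
  by rewrite (_ : [set t | _] = [set t | I01 t /\ discont_at f t]) //;
    apply/seteqP; split => t [It /discont_at_subr].
exists (M + del) => t It; apply: le_trans (ler_normB _ _) _.
by rewrite (ger0_norm del0) lerD2r fM.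
Qed.

Lemma Gfun_subr (f : R -> R) (del : R) : E01neg f -> 0 <= del ->
  Gfun P eta f <= Gfun P eta (fun x => f x - del) + m * del.
Proof.
move=> fE del0; have fdE := E01neg_subr fE del0.
have := Gfun_lipschitz fE fdE; rewrite ler_norml => /andP[_ lip].
have sdel : m * supnorm (f \- (fun x => f x - del)) <= m * del.
  apply: ler_wpM2l; first exact: ltW.
  by apply: supnorm_le => t It /=; rewrite opprB addrC subrK ger0_norm.
lra.
Qed.

Lemma P_ev_lt (f : R -> R) : E01neg f -> P (ev_lt eta f) = P (ev_le eta f).
Proof.
move=> fE; have fD := fE.1.2.
apply: probability_eq_approx.
- exact: ev_lt_measurable.
- exact: ev_le_measurable.
- by move=> w lt t It; exact/ltW/lt.
move=> e e0; have del0 : 0 < e / m by rewrite divr_gt0.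
have fdE := E01neg_subr fE (ltW del0).
exists (ev_le eta (fun x => f x - e / m)); first exact: ev_le_measurable fdE.1.2.
split; first by move=> w le t It; have := le t It; lra.
have := Gfun_subr fE (ltW del0); rewrite mulrCA mulfV ?gt_eqF // mulr1 => G_subr.
by rewrite !P_ev_leE // -EFinD lee_fin.
Qed.

Lemma P_ev_touch (f : R -> R) : E01neg f -> P (ev_touch eta f) = 0%E.
Proof.
move=> fE; have fD := fE.1.2.
apply: (probability_eq0_approx (B := ev_le eta f)).
- exact: ev_touch_measurable.
- exact: ev_le_measurable.
- by move=> w [].
move=> e e0; have del0 : 0 < e / m by rewrite divr_gt0.
have fdE := E01neg_subr fE (ltW del0).
exists (ev_le eta (fun x => f x - e / m)); first exact: ev_le_measurable fdE.1.2.
split.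
- by move=> w le t It; have := le t It; lra.
- apply/seteqP; split => // w [le [_ close]].
  have [n] := ltr_add_invr del0; rewrite add0r => ne.
  have [t [It [_ ft]]] := close n; have := le t It.
  by move: ne ft; move: (n.+1%:R^-1) => x; lra.
have := Gfun_subr fE (ltW del0); rewrite mulrCA mulfV ?gt_eqF // mulr1 => G_subr.
by rewrite !P_ev_leE // -EFinD lee_fin.
Qed.

End FunctionalDistribution.

Theorem mainTheorem4 (R : realType)
  (d : measure_display) (Om : measurableType d) (P : probability Om R)
  (eta : Om -> R -> R)
  (d' : measure_display) (Om' : measurableType d') (Q : probability Om' R)
  (Z : Om' -> R -> R) :
  std_max_stable P eta Q Z ->
  (forall f, E01neg f -> P (ev_le eta f) = expeR (- Dnorm Q Z f)%E) ->
  (forall f, E01neg f -> forall e : R, 0 < e -> exists2 del : R, 0 < del &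
     forall g, E01neg g -> supnorm (f \- g) < del ->
       `|Gfun P eta f - Gfun P eta g| < e) /\
  (forall f, E01neg f ->
     P (ev_le eta f) = P (ev_lt eta f) /\
     P [set w | C01neg_boundary [set g | forall t, I01 t -> g t <= f t] (eta w)]
       = 0%E).
Proof.
move=> [[Zm [Zc [Zge0 [[m [m1 Zmax]] _]]]] [etam [etaC _]]] PG.
have m0 : 0 < m := lt_le_trans ltr01 m1.
have etac w : {within I01, continuous (eta w)} := (etaC w).1.
split=> [f fE e e0|f fE].
  exists (e / m) => [|g gE fg]; first by rewrite divr_gt0.
  apply: le_lt_trans (Gfun_lipschitz Zm Zc Zge0 m0 Zmax PG fE gE) _.
  by rewrite -ltr_pdivlMl // mulrC.
split; first by rewrite (P_ev_lt Zm Zc Zge0 m0 Zmax etam etac PG fE).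
have -> : [set w | C01neg_boundary [set g | forall t, I01 t -> g t <= f t] (eta w)] =
    ev_touch eta f.
  by apply/seteqP; split => w /(C01neg_boundary_leE f (etaC w)).
exact: (P_ev_touch Zm Zc Zge0 m0 Zmax etam etac PG fE).
Qed.
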